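(* Let $(S,K,I)$ be a split graph. If the factor graph $\Phi(S)$ contains an induced path $v_1v_2v_3$ such that $d_1\leq d_2$ and $\sigma_{23}=1$, then: (1) $N_1-N_2=\{x\}=N_3-N_2$ for some vertex $x$ of $S$; (2) $N_3=\{x\}\dot\cup(N_2\cap N_3)\subsetneq N_1\cup N_2$; (3) $\sigma_{12}=d_2-d_1+1$.
   Context: A split graph $(S,K,I)$ is a graph $S$ together with a fixed partition $V(S)=K\dot\cup I$, where $K$ is a clique and $I$ is an independent set. For a vertex $v_i$ of $S$, $N_i$ denotes its open neighborhood in $S$ and $d_i=|N_i|$; $\eta_{uv}=|N_u\cap N_v|$. The factor graph $\Phi(S)$ is the loopless multigraph with vertex set $I$ in which, for distinct $u,v\in I$, there is one edge joining $u$ and $v$ for each 2-switch of $S$ acting on $u$ and $v$ (a 2-switch replaces edges $ab,cd$ with $ac,bd$ when $ab,cd\in E(S)$ and $ac,bd\notin E(S)$); equivalently, the multiplicity of $uv$ is $\sigma_{uv}=(d_u-\eta_{uv})(d_v-\eta_{uv})$, and $u,v$ are adjacent iff $\sigma_{uv}>0$; $\sigma_{ij}$ denotes $\sigma_{v_iv_j}$. An induced path in $\Phi(S)$ consists of distinct vertices with consecutive ones adjacent and no other pair adjacent (multiplicities ignored). *)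

From mathcomp Require Import all_boot.
Set Implicit Arguments. Unset Strict Implicit. Unset Printing Implicit Defensive.

Definition simple_graph (V : finType) (e : rel V) : Prop :=
  symmetric e /\ irreflexive e.

Definition split_graph (V : finType) (e : rel V) (K I : {set V}) : Prop :=
  [/\ simple_graph e,
      K :&: I = set0, K :|: I = [set: V],
      (forall u v, u \in K -> v \in K -> u != v -> e u v)
    & (forall u v, u \in I -> v \in I -> ~~ e u v)].

Definition nbhd (V : finType) (e : rel V) (v : V) : {set V} := [set w | e v w].
Definition deg (V : finType) (e : rel V) (v : V) : nat := #|nbhd e v|.
Definition eta (V : finType) (e : rel V) (u v : V) : nat :=
  #|nbhd e u :&: nbhd e v|.

(* multiplicity of the edge uv in the factor graph Phi(S) *)
Definition sigma (V : finType) (e : rel V) (u v : V) : nat :=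
  (deg e u - eta e u v) * (deg e v - eta e u v).

Definition phi_adj (V : finType) (e : rel V) (I : {set V}) (u v : V) : bool :=
  [&& u \in I, v \in I, u != v & 0 < sigma e u v].

Definition phi_induced_P3 (V : finType) (e : rel V) (I : {set V})
  (v1 v2 v3 : V) : Prop :=
  [/\ [&& v1 \in I, v2 \in I & v3 \in I],
      [&& v1 != v2, v2 != v3 & v1 != v3],
      phi_adj e I v1 v2, phi_adj e I v2 v3 & ~~ phi_adj e I v1 v3].

From mathcomp Require Import all_boot.
From mathcomp Require Import zify.

Set Implicit Arguments.
Unset Strict Implicit.
Unset Printing Implicit Defensive.

(* Since [eta u v = |N_u :&: N_v|], the multiplicity [sigma u v] is
   [|N_u :\: N_v| * |N_v :\: N_u|].  Hence [sigma_23 = 1] gives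
   [N_3 :\: N_2 = {x}] and [|N_2 :\: N_3| = 1], so [d_2 = d_3], while the
   non-adjacency of [v_1] and [v_3] says that [N_1] and [N_3] are nested.
   If [N_1 \subset N_3], the nonempty set [N_1 :\: N_2] lies inside
   [N_3 :\: N_2 = {x}]; if [N_3 \subset N_1], then [d_1 <= d_2 = d_3] forces
   [N_1 = N_3]. *)

Section SetDifferences.
Variable T : finType.
Implicit Types A B C : {set T}.

Lemma cardsD_swap A B : #|A :\: B| + #|B| = #|B :\: A| + #|A|.
Proof. rewrite -(cardsID A B) -(cardsID B A) setIC; lia. Qed.

Lemma setD_eq_set1 A B C x :
  C :\: B = [set x] -> A \subset C -> A :\: B != set0 -> A :\: B = [set x].
Proof.
move=> CB sAC AB0; apply/eqP; rewrite eqEcard cards1 card_gt0 AB0 andbT -CB.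
exact: setSD.
Qed.

Lemma setD_nested_eq_set1 A B C x :
  (A \subset C) || (C \subset A) -> A :\: B != set0 -> #|A| <= #|B| ->
  #|B :\: C| = 1 -> C :\: B = [set x] -> A :\: B = [set x].
Proof.
move=> /orP[sAC|sCA] AB0 leAB BC CB; first exact: setD_eq_set1 CB sAC AB0.
suff -> : A = C by [].
apply/eqP; rewrite eq_sym eqEcard sCA /=.
have := cardsD_swap B C; rewrite BC CB cards1; lia.
Qed.

Lemma proper_setU_of_setD A B C :
  C :\: B \subset A -> B :\: C != set0 -> C \proper A :|: B.
Proof.
move=> CBA /set0Pn[y /setDP[yB yC]]; rewrite properE setUC -subDset CBA /=.
by apply/subsetPn; exists y; rewrite // inE yB.
Qed.

End SetDifferences.

Section FactorGraph.
Variables (V : finType) (e : rel V).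

Lemma sigmaE u v :
  sigma e u v = #|nbhd e u :\: nbhd e v| * #|nbhd e v :\: nbhd e u|.
Proof. by rewrite /sigma /deg /eta !cardsD [nbhd e v :&: _]setIC. Qed.

Lemma sigma_eq0 u v :
  (sigma e u v == 0) = (nbhd e u \subset nbhd e v) || (nbhd e v \subset nbhd e u).
Proof. by rewrite sigmaE muln_eq0 !cards_eq0 !setD_eq0. Qed.

Lemma phi_adjE (I : {set V}) u v :
  u \in I -> v \in I -> u != v -> phi_adj e I u v = (0 < sigma e u v).
Proof. by rewrite /phi_adj => -> -> ->. Qed.

End FactorGraph.

Theorem proposition4p4 (V : finType) (e : rel V) (K I : {set V})
  (v1 v2 v3 : V) :
  split_graph e K I ->
  phi_induced_P3 e I v1 v2 v3 ->
  deg e v1 <= deg e v2 ->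
  sigma e v2 v3 = 1 ->
  exists x : V,
    [/\ nbhd e v1 :\: nbhd e v2 = [set x] /\ nbhd e v3 :\: nbhd e v2 = [set x],
        (nbhd e v3 = x |: (nbhd e v2 :&: nbhd e v3)
           /\ x \notin nbhd e v2 :&: nbhd e v3)
          /\ nbhd e v3 \proper nbhd e v1 :|: nbhd e v2
      & sigma e v1 v2 = deg e v2 - deg e v1 + 1].
Proof.
move=> _ [/and3P[i1 i2 i3] /and3P[n12 _ n13] + _ +].
rewrite !phi_adjE // -eqn0Ngt sigma_eq0 !sigmaE /deg.
set A := nbhd e v1; set B := nbhd e v2; set C := nbhd e v3.
rewrite muln_gt0 !card_gt0 => /andP[AB0 _] nested le12.
move=> /eqP; rewrite muln_eq1 => /andP[/eqP BC /cards1P[x CB]].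
have AB : A :\: B = [set x] := setD_nested_eq_set1 nested AB0 le12 BC CB.
have /setDP[_ xB] : x \in C :\: B by rewrite CB set11.
exists x; split; [by split | split; [split|] | ].
- by rewrite -{1}(setID C B) CB setUC setIC.
- by rewrite inE (negbTE xB).
- apply: proper_setU_of_setD; first by rewrite CB -AB subsetDl.
  by rewrite -card_gt0 BC.
- rewrite AB cards1 mul1n; have := cardsD_swap A B.
  by rewrite AB cards1; lia.
Qed.
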